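(* Let $\rho_n=6-4\big(1+\frac1n\big)^{3/2}-4\big(1-\frac1n\big)^{3/2}+\big(1+\frac2n\big)^{3/2}+\big(1-\frac2n\big)^{3/2}$ for $n\ge2$. For every finitely supported complex sequence $\{A_n\}_{n\ge0}$ with $A_0=A_1=0$, not identically zero, and with the convention $A_{-1}=0$, $$\sum_{n=1}^\infty|A_n-2A_{n-1}+A_{n-2}|^2\ \ge\ \sum_{n=2}^\infty\rho_n|A_n|^2\ >\ \frac{9}{16}\sum_{n=2}^\infty\frac{|A_n|^2}{n^4}\ \ge\ \frac{9}{16}\sum_{n=1}^\infty\frac{|A_n|^2}{n^2(n+1)^2}.$$
   Context: $\rho_n=((-\Delta)^2 n^{3/2})/n^{3/2}$ is the improved Rellich weight of Gerhat–Krejčiřík–Štampach, where $(-\Delta)$ is the discrete Dirichlet Laplacian $((-\Delta)A)_n=2A_n-A_{n-1}-A_{n+1}$. The left side is $\sum_n|(\nabla^2A)_n|^2$ with $\nabla$ the backward difference; this is the inequality form used to relate the order-2 Knopp inequality to the Rellich inequality. *)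

From Stdlib Require Import Reals.
From Coquelicot Require Import Coquelicot.
Open Scope R_scope.

(* x^(3/2) for x >= 0, written as x * sqrt x (so that 0^(3/2) = 0). *)
Definition pow32 (x : R) : R := x * sqrt x.

Definition rho (n : nat) : R :=
  6 - 4 * pow32 (1 + 1 / INR n) - 4 * pow32 (1 - 1 / INR n)
    + pow32 (1 + 2 / INR n) + pow32 (1 - 2 / INR n).

(* Second backward difference (nabla^2 A)_n = A_n - 2 A_{n-1} + A_{n-2},
   with the convention A_{-1} = 0 (only n >= 1 is used). *)
Definition second_diff (A : nat -> C) (n : nat) : C :=
  match n with
  | O => A O
  | S O => Cminus (A 1%nat) (Cmult (RtoC 2) (A O))
  | S (S m as k) => Cplus (Cminus (A (S k)) (Cmult (RtoC 2) (A k))) (A m)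
  end.

Definition finitely_supported (A : nat -> C) : Prop :=
  exists N : nat, forall n : nat, (N < n)%nat -> A n = RtoC 0.

(* Let g_n = n^{3/2}, h_n = g_n - g_{n-1} and U_n = 2 h_n - h_{n-1} - h_{n+1}
   (minus the third difference of g).  The proof combines three facts.
   1. Explicit polynomial bounds on (1+y)^{3/2} +- (1-y)^{3/2}, obtained by
      writing sqrt(1 +- y) = m +- s with m^2 + s^2 = 1.  They give U_n >= 0
      for n >= 2 and rho_n > 9/(16 n^4); moreover rho_n g_n = U_n - U_{n+1}.
   2. A weighted discrete Hardy inequality with ground state w: summing the
      pointwise bound (x - y)^2 >= (1 - p/q) x^2 + (1 - q/p) y^2 by parts,
      sum c_n (x_n - x_{n-1})^2
        >= sum [c_n (1 - w_{n-1}/w_n) + c_{n+1} (1 - w_{n+1}/w_n)] x_n^2.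
      Applied to nabla a with w = h, c = 1 it yields the weight U/h >= 0;
      applied to a with w = g, c = U/h it yields the weight rho.  Chaining
      the two gives sum |nabla^2 a|^2 >= sum rho |a|^2 for real a.
   3. For finitely supported sequences every series of the statement is a
      finite sum; complex sequences split into real and imaginary parts. *)

From Stdlib Require Import Reals Lra Lia Psatz.
From Coquelicot Require Import Coquelicot.
Open Scope R_scope.

Definition pow32_sum (y : R) : R := pow32 (1 + y) + pow32 (1 - y).
Definition pow32_diff (y : R) : R := pow32 (1 + y) - pow32 (1 - y).

Lemma powers_between (lo m : R) (k : nat) :
  0 <= lo <= m -> m <= 1 -> lo ^ k <= m ^ k <= 1.
Proof.
  intros Hlo Hm. split; [apply pow_incr; lra|].
  rewrite <- (pow1 k). apply pow_incr. lra.
Qed.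

(* Puts the bounds lo^k <= m^k <= 1 for k = 2..9 in the context, so that the
   polynomial inequalities below become linear in the powers of m. *)
Ltac bound_powers lo m :=
  let B := fresh "B" in
  assert (B : forall k, lo ^ k <= m ^ k <= 1)
    by (intro; apply powers_between; lra);
  pose proof (B 2%nat); pose proof (B 3%nat); pose proof (B 4%nat);
  pose proof (B 5%nat); pose proof (B 6%nat); pose proof (B 7%nat);
  pose proof (B 8%nat); pose proof (B 9%nat); clear B; simpl in *.

Lemma sum_lower_factor (m : R) : 7/10 <= m <= 1 ->
  0 <= -2 - 2*m + m^2 + 4*m^3 + 25/4*m^4 + 7*m^5 + 49/8*m^6 + 7/2*m^7 + 7/8*m^8.
Proof. intros Hm. bound_powers (7/10) m. lra. Qed.

Lemma sum_upper_factor (m : R) : 96/100 <= m <= 1 ->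
  0 <= 2 - 3*m^2 - 3*m^3 - 9/4*m^4 - 3/4*m^5 + 2*m^6 + 6*m^7 + 6*m^8 + 2*m^9.
Proof. intros Hm. bound_powers (96/100) m. lra. Qed.

Lemma diff_factor (m : R) : 7/10 <= m <= 1 -> 0 <= -2 + 2*m + 2*m^2 + m^3 <= 3.
Proof. intros Hm. bound_powers (7/10) m. lra. Qed.

(* Writing sqrt(1 + y) = m + s and sqrt(1 - y) = m - s turns both
   combinations into polynomials in m and s with m^2 + s^2 = 1. *)
Lemma pow32_param (y : R) : 0 <= y <= 1 ->
  exists m s, 0 <= s /\ 7/10 <= m <= 1 /\ 1/2 <= m^2 /\ m^2 + s^2 = 1 /\
    y = 2*m*s /\ pow32_sum y = 6*m - 4*m^3 /\ pow32_diff y = 6*s - 4*s^3.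
Proof.
  intros Hy.
  set (a := sqrt (1 + y)). set (b := sqrt (1 - y)).
  assert (Ha : a * a = 1 + y) by (apply sqrt_sqrt; lra).
  assert (Hb : b * b = 1 - y) by (apply sqrt_sqrt; lra).
  assert (a0 : 0 <= a) by apply sqrt_pos.
  assert (b0 : 0 <= b) by apply sqrt_pos.
  assert (ab : b <= a) by (apply sqrt_le_1_alt; lra).
  assert (0 <= a * b) by nra.
  exists ((a + b) / 2), ((a - b) / 2).
  unfold pow32_sum, pow32_diff, pow32. fold a b. rewrite <- Ha, <- Hb.
  repeat split; nra.
Qed.

(* Two-sided bounds on P = pow32_sum and Q = pow32_diff by their Taylor
   polynomials.  In the parameters of pow32_param each gap is (1 - m)^j
   times one of the nonnegative polynomial factors above. *)
Lemma pow32_sum_lower (y : R) : 0 <= y <= 1 ->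
  2 + 3/4*y^2 + 3/64*y^4 + 7/512*y^6 <= pow32_sum y.
Proof.
  intros Hy. destruct (pow32_param y Hy) as (m & s & _ & Hm & _ & Hms & Hy2 & HP & _).
  rewrite HP.
  assert (Y : y^2 = 4*m^2*(1 - m^2)) by (rewrite Hy2; replace (1 - m^2) with (s^2) by lra; ring).
  replace (y^4) with ((y^2)^2) by ring. replace (y^6) with ((y^2)^3) by ring. rewrite Y.
  pose proof (sum_lower_factor m Hm).
  assert (0 <= (1 - m)^4) by (apply pow_le; lra).
  match goal with |- ?L <= ?R => assert (R - L = (1 - m)^4 *
   (-2 - 2*m + m^2 + 4*m^3 + 25/4*m^4 + 7*m^5 + 49/8*m^6 + 7/2*m^7 + 7/8*m^8)) by field end.
  nra.
Qed.

Lemma pow32_sum_upper (y : R) : 0 <= y <= 1/2 ->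
  pow32_sum y <= 2 + 3/4*y^2 + 3/64*y^4 + 1/32*y^6.
Proof.
  intros Hy. destruct (pow32_param y ltac:(lra)) as (m & s & _ & Hm & Hm2 & Hms & Hy2 & HP & _).
  rewrite HP.
  assert (Y : y^2 = 4*m^2*(1 - m^2)) by (rewrite Hy2; replace (1 - m^2) with (s^2) by lra; ring).
  (* y <= 1/2 forces m^2 >= 93/100, hence m >= 96/100. *)
  assert (m^2 >= 93/100).
  { assert (y^2 <= 1/4) by nra. set (u := m^2) in *.
    destruct (Rlt_or_le u (93/100)); [|lra]. assert ((u - 1/2)^2 < 3/16) by nra. nra. }
  assert (Hm' : 96/100 <= m <= 1) by nra.
  replace (y^4) with ((y^2)^2) by ring. replace (y^6) with ((y^2)^3) by ring. rewrite Y.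
  pose proof (sum_upper_factor m Hm').
  assert (0 <= (1 - m)^3) by (apply pow_le; lra).
  match goal with |- ?L <= ?R => assert (R - L = (1 - m)^3 *
   (2 - 3*m^2 - 3*m^3 - 9/4*m^4 - 3/4*m^5 + 2*m^6 + 6*m^7 + 6*m^8 + 2*m^9)) by field end.
  nra.
Qed.

Lemma pow32_diff_bounds (y : R) : 0 <= y <= 1 ->
  3*y - y^3/8 - y^5 <= pow32_diff y <= 3*y - y^3/8.
Proof.
  intros Hy. destruct (pow32_param y Hy) as (m & s & Hs & Hm & _ & Hms & Hy2 & _ & HQ).
  rewrite HQ, Hy2.
  pose proof (diff_factor m Hm) as [F0 F3].
  assert (S2 : s^2 = 1 - m^2) by lra.
  assert (E1 : 3*(2*m*s) - (2*m*s)^3/8 - (6*s - 4*s^3)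
               = s * (1 - m)^2 * (-2 + 2*m + 2*m^2 + m^3)).
  { replace (s^3) with (s*s^2) by ring.
    replace ((2*m*s)^3) with (8*m^3*s*s^2) by ring. rewrite S2. field. }
  assert (E2 : (6*s - 4*s^3) - (3*(2*m*s) - (2*m*s)^3/8 - (2*m*s)^5)
               = s * (1 - m)^2 * (32*m^5*(1 + m)^2 - (-2 + 2*m + 2*m^2 + m^3))).
  { replace (s^3) with (s*s^2) by ring.
    replace ((2*m*s)^3) with (8*m^3*s*s^2) by ring.
    replace ((2*m*s)^5) with (32*m^5*s*(s^2)^2) by ring. rewrite S2. field. }
  assert (m^5 >= 16/100) by (pose proof (powers_between (7/10) m 5 ltac:(lra) ltac:(lra)); simpl in *; lra).
  assert (32*m^5*(1 + m)^2 >= 3) by nra.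
  assert (0 <= s*(1 - m)^2) by (apply Rmult_le_pos; [lra | apply pow2_ge_0]).
  assert (0 <= s*(1 - m)^2 * (32*m^5*(1 + m)^2 - (-2 + 2*m + 2*m^2 + m^3)))
    by (apply Rmult_le_pos; lra).
  assert (0 <= s*(1 - m)^2 * (-2 + 2*m + 2*m^2 + m^3)) by (apply Rmult_le_pos; lra).
  lra.
Qed.

Lemma pow32_lt (y x : R) : 0 <= y < x -> pow32 y < pow32 x.
Proof.
  intros H. unfold pow32.
  assert (sqrt y < sqrt x) by (apply sqrt_lt_1_alt; lra).
  pose proof (sqrt_pos y). nra.
Qed.

Lemma pow32_pos (x : R) : 0 < x -> 0 < pow32 x.
Proof.
  intros Hx. replace 0 with (pow32 0) by (unfold pow32; ring). apply pow32_lt. lra.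
Qed.

(* Homogeneity of x^{3/2}: it lets every g_k be expanded around a common
   center c as c^{3/2} (t / c)^{3/2}. *)
Lemma pow32_scale (c t : R) : 0 < c -> 0 <= t -> pow32 t = pow32 c * pow32 (t / c).
Proof.
  intros Hc Ht. unfold pow32. rewrite sqrt_div by lra.
  assert (0 < sqrt c) by (apply sqrt_lt_R0; lra). field. lra.
Qed.

Definition g32 (k : nat) : R := pow32 (INR k).
Definition h32 (k : nat) : R := g32 k - g32 (pred k).
Definition U32 (k : nat) : R := 2 * h32 k - h32 (pred k) - h32 (S k).

Lemma g32_pos (k : nat) : (1 <= k)%nat -> 0 < g32 k.
Proof.
  intros Hk. apply pow32_pos. pose proof (le_INR 1 k Hk). simpl in *. lra.
Qed.

Lemma h32_pos (k : nat) : (1 <= k)%nat -> 0 < h32 k.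
Proof.
  intros Hk. unfold h32, g32. destruct k as [|k]; [lia|]. simpl pred.
  rewrite S_INR. pose proof (pos_INR k).
  pose proof (pow32_lt (INR k) (INR k + 1) ltac:(lra)). lra.
Qed.

(* Expanded around c = k + 3/2 with z = 1/(2k+3), U_{k+2} equals
   c^{3/2} (3 Q(z) - Q(3z)) with Q = pow32_diff, and the bounds on Q
   give 3 Q(z) - Q(3z) >= 3 z^3 (1 - z^2) >= 0. *)
Lemma U32_nonneg (k : nat) : 0 <= U32 (S (S k)).
Proof.
  unfold U32, h32. simpl pred. unfold g32. rewrite !S_INR.
  set (x := INR k). assert (Hx : 0 <= x) by apply pos_INR.
  set (c := x + 3/2). assert (Hc : 0 < c) by (unfold c; lra).
  set (z := 1 / (2*x + 3)).
  assert (Hz : 0 < z <= 1/3).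
  { unfold z. split; [apply Rdiv_lt_0_compat; lra|].
    apply (Rmult_le_reg_r (2*x + 3)); [lra|]. field_simplify; lra. }
  rewrite (pow32_scale c (x+1+1+1)), (pow32_scale c (x+1+1)),
    (pow32_scale c (x+1)), (pow32_scale c x) by lra.
  replace ((x+1+1+1)/c) with (1 + 3*z) by (unfold z, c; field; lra).
  replace ((x+1+1)/c) with (1 + z) by (unfold z, c; field; lra).
  replace ((x+1)/c) with (1 - z) by (unfold z, c; field; lra).
  replace (x/c) with (1 - 3*z) by (unfold z, c; field; lra).
  pose proof (pow32_diff_bounds z ltac:(lra)) as [Qz _].
  pose proof (pow32_diff_bounds (3*z) ltac:(lra)) as [_ Q3z].
  unfold pow32_diff in Qz, Q3z.
  pose proof (pow32_pos c Hc).
  assert (0 <= 3*z^3 * (1 - z^2)) by (apply Rmult_le_pos; [pose proof (pow_le z 3); lra | nra]).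
  nra.
Qed.

Lemma rho_g32 (k : nat) : rho (S (S k)) * g32 (S (S k)) = U32 (S (S k)) - U32 (S (S (S k))).
Proof.
  unfold rho, U32, h32. simpl pred. unfold g32. rewrite !S_INR.
  set (x := INR k). assert (Hx : 0 <= x) by apply pos_INR.
  set (n := x + 1 + 1). assert (0 < n) by (unfold n; lra).
  rewrite (pow32_scale n (n+1+1)), (pow32_scale n (n+1)),
    (pow32_scale n (x+1)), (pow32_scale n x) by (unfold n; lra).
  replace ((n+1+1)/n) with (1 + 2/n) by (unfold n; field; lra).
  replace ((n+1)/n) with (1 + 1/n) by (unfold n; field; lra).
  replace ((x+1)/n) with (1 - 1/n) by (unfold n; field; lra).
  replace (x/n) with (1 - 2/n) by (unfold n; field; lra).
  fold n. ring.
Qed.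

(* sum_from2 f k = f 2 + f 3 + ... + f (k + 1). *)
Fixpoint sum_from2 (f : nat -> R) (k : nat) : R :=
  match k with O => 0 | S k' => sum_from2 f k' + f (S (S k')) end.

Lemma sum_from2_ext (f f' : nat -> R) (k : nat) :
  (forall n, (2 <= n)%nat -> f n = f' n) -> sum_from2 f k = sum_from2 f' k.
Proof. intros H. induction k; simpl; [lra|]. rewrite IHk, (H (S (S k))) by lia. lra. Qed.

Lemma sum_from2_le (f f' : nat -> R) (k : nat) :
  (forall n, (2 <= n)%nat -> f n <= f' n) -> sum_from2 f k <= sum_from2 f' k.
Proof. intros H. induction k; simpl; [lra|]. pose proof (H (S (S k)) ltac:(lia)). lra. Qed.

Lemma sum_from2_lt (f f' : nat -> R) (k j : nat) :
  (forall n, (2 <= n)%nat -> f n <= f' n) -> (2 <= j <= S k)%nat -> f j < f' j ->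
  sum_from2 f k < sum_from2 f' k.
Proof.
  intros H Hj Hfj. induction k as [|k IHk]; [lia|]. simpl.
  destruct (Nat.eq_dec j (S (S k))) as [->|ne].
  - pose proof (sum_from2_le f f' k H). lra.
  - pose proof (IHk ltac:(lia)). pose proof (H (S (S k)) ltac:(lia)). lra.
Qed.

Lemma sum_from2_plus (f f' : nat -> R) (k : nat) :
  sum_from2 (fun n => f n + f' n) k = sum_from2 f k + sum_from2 f' k.
Proof. induction k; simpl; [lra|]. rewrite IHk. lra. Qed.

Lemma sum_from2_scal (c : R) (f : nat -> R) (k : nat) :
  sum_from2 (fun n => c * f n) k = c * sum_from2 f k.
Proof. induction k; simpl; [lra|]. rewrite IHk. lra. Qed.

Lemma sum_from2_shift (X Y : nat -> R) (k : nat) :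
  sum_from2 (fun n => X n + Y n) k
  = sum_from2 (fun n => X n + Y (S n)) k + Y 2%nat - Y (S (S k)).
Proof. induction k; simpl; [lra|]. rewrite IHk. lra. Qed.

(* Pointwise ground state bound: for p, q > 0,
   (x - y)^2 - (1 - p/q) x^2 - (1 - q/p) y^2 = (p x - q y)^2 / (p q) >= 0. *)
Lemma ground_state_bound (p q x y : R) : 0 < p -> 0 < q ->
  (1 - p/q) * x^2 + (1 - q/p) * y^2 <= (x - y)^2.
Proof.
  intros Hp Hq.
  assert (E : (x - y)^2 - ((1 - p/q) * x^2 + (1 - q/p) * y^2) = (p*x - q*y)^2 / (p*q))
    by (field; lra).
  assert (0 <= (p*x - q*y)^2 / (p*q)) by (apply Rdiv_le_0_compat; [apply pow2_ge_0 | nra]).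
  lra.
Qed.

Lemma weighted_hardy (c w x : nat -> R) (k : nat) :
  (forall n, (1 <= n)%nat -> 0 < w n) -> (forall n, (2 <= n)%nat -> 0 <= c n) ->
  x 1%nat = 0 -> x (S k) = 0 ->
  sum_from2 (fun n => (c n * (1 - w (pred n) / w n) + c (S n) * (1 - w (S n) / w n)) * x n ^ 2) k
  <= sum_from2 (fun n => c n * (x n - x (pred n)) ^ 2) k.
Proof.
  intros Hw Hc x1 xk.
  set (X := fun n => c n * (1 - w (pred n) / w n) * x n ^ 2).
  set (Y := fun n => c n * (1 - w n / w (pred n)) * x (pred n) ^ 2).
  apply Rle_trans with (sum_from2 (fun n => X n + Y n) k).
  - rewrite sum_from2_shift.
    assert (Y2 : Y 2%nat = 0) by (unfold Y; simpl; rewrite x1; ring).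
    assert (Yk : Y (S (S k)) = 0) by (unfold Y; simpl; rewrite xk; ring).
    rewrite Y2, Yk, Rminus_0_r, Rplus_0_r.
    apply Req_le, sum_from2_ext. intros n _. unfold X, Y. simpl pred. ring.
  - apply sum_from2_le. intros n Hn. unfold X, Y.
    rewrite !Rmult_assoc, <- Rmult_plus_distr_l.
    apply Rmult_le_compat_l; [apply Hc; lia|].
    apply ground_state_bound; apply Hw; lia.
Qed.

(* Backward difference of a real sequence (with a_{-1} replaced by a_0). *)
Definition nabla (a : nat -> R) (n : nat) : R := a n - a (pred n).

(* The improved Rellich inequality for real sequences: apply weighted_hardy
   to nabla a with ground state h (coefficient V = U/h >= 0), then to a with
   ground state g and weight V (coefficient (U_n - U_{n+1})/g_n = rho_n). *)
Lemma rellich_real (a : nat -> R) (N : nat) :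
  a 0%nat = 0 -> a 1%nat = 0 -> (forall n, (N < n)%nat -> a n = 0) ->
  sum_from2 (fun n => rho n * a n ^ 2) (S N)
  <= sum_from2 (fun n => nabla (nabla a) n ^ 2) (S N).
Proof.
  intros a0 a1 aN.
  set (V := fun n => U32 n / h32 n).
  assert (V_nonneg : forall n, (2 <= n)%nat -> 0 <= V n).
  { intros n Hn. destruct n as [|[|k]]; [lia | lia |].
    apply Rdiv_le_0_compat; [apply U32_nonneg | apply h32_pos; lia]. }
  assert (outer : sum_from2 (fun n => V n * nabla a n ^ 2) (S N)
                  <= sum_from2 (fun n => nabla (nabla a) n ^ 2) (S N)).
  { apply Rle_trans with (sum_from2 (fun n =>
      (1 * (1 - h32 (pred n) / h32 n) + 1 * (1 - h32 (S n) / h32 n)) * nabla a n ^ 2) (S N)).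
    { apply Req_le, sum_from2_ext. intros n Hn.
      pose proof (h32_pos n ltac:(lia)). unfold V, U32. field. lra. }
    eapply Rle_trans.
    { apply (weighted_hardy (fun _ => 1) h32 (nabla a)); [apply h32_pos | intros; lra | |].
      - unfold nabla. simpl. rewrite a0, a1. ring.
      - unfold nabla. simpl pred. rewrite !aN by lia. ring. }
    apply Req_le, sum_from2_ext. intros n _. unfold nabla at 3. ring. }
  assert (inner : sum_from2 (fun n => rho n * a n ^ 2) (S N)
                  <= sum_from2 (fun n => V n * nabla a n ^ 2) (S N)).
  { apply Rle_trans with (sum_from2 (fun n =>
      (V n * (1 - g32 (pred n) / g32 n) + V (S n) * (1 - g32 (S n) / g32 n)) * a n ^ 2) (S N)).
    { apply Req_le, sum_from2_ext. intros n Hn. destruct n as [|[|k]]; [lia | lia |].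
      pose proof (g32_pos (S (S k)) ltac:(lia)) as Hg.
      pose proof (h32_pos (S (S k)) ltac:(lia)) as Hh2.
      pose proof (h32_pos (S (S (S k))) ltac:(lia)) as Hh3.
      assert (Hrho : rho (S (S k)) = (U32 (S (S k)) - U32 (S (S (S k)))) / g32 (S (S k)))
        by (rewrite <- rho_g32; field; lra).
      rewrite Hrho. unfold V. unfold h32 in *. simpl pred in *. field. lra. }
    apply weighted_hardy; [apply g32_pos | exact V_nonneg | exact a1 | apply aN; lia]. }
  lra.
Qed.

(* With x = 1/n <= 1/2, rho_n = 6 - 4 P(x) + P(2x) for P = pow32_sum, and
   the bounds on P give rho_n >= 9/16 x^4 + 3/4 x^6. *)
Lemma rho_lower (n : nat) : (2 <= n)%nat -> 9/16 / INR n ^ 4 < rho n.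
Proof.
  intros Hn. assert (H2 : 2 <= INR n) by (apply (le_INR 2); lia).
  set (x := 1 / INR n).
  assert (Hx : 0 < x <= 1/2).
  { unfold x. split; [apply Rdiv_lt_0_compat; lra|].
    apply (Rmult_le_reg_r (INR n)); [lra|]. field_simplify; lra. }
  replace (9/16 / INR n ^ 4) with (9/16 * x^4) by (unfold x; field; lra).
  assert (Hrho : rho n = 6 - 4 * pow32_sum x + pow32_sum (2*x)).
  { unfold rho, pow32_sum. fold x.
    replace (2 / INR n) with (2 * x) by (unfold x; field; lra). ring. }
  rewrite Hrho.
  pose proof (pow32_sum_lower (2*x) ltac:(lra)).
  pose proof (pow32_sum_upper x ltac:(lra)).
  assert (0 < x^6) by (apply pow_lt; lra).
  nra.
Qed.

Lemma Series_finite (F : nat -> R) (M : nat) :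
  (forall n, (M < n)%nat -> F n = 0) -> Series F = sum_f_R0 F M.
Proof.
  intros H.
  assert (tail : forall p, (M <= p)%nat -> sum_f_R0 F p = sum_f_R0 F M).
  { induction p as [|p IHp]; intros Hp.
    - replace M with 0%nat by lia. reflexivity.
    - destruct (Nat.eq_dec M (S p)) as [->|ne]; [reflexivity|].
      simpl. rewrite IHp, (H (S p)) by lia. ring. }
  apply is_series_unique. unfold is_series.
  eapply filterlim_ext_loc; [| apply filterlim_const].
  exists M. intros p Hp. rewrite sum_n_Reals. symmetry. now apply tail.
Qed.

Lemma Series_from2 (f : nat -> R) (N : nat) :
  (forall n, (S (S N) < n)%nat -> f n = 0) ->
  Series (fun n => if (n <? 2)%nat then 0 else f n) = sum_from2 f (S N).
Proof.
  intros H. rewrite (Series_finite _ (S (S N))).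
  - generalize (S N). induction n as [|k IHk]; simpl; [lra|].
    rewrite <- IHk. simpl. ring.
  - intros n Hn. destruct (n <? 2)%nat; [reflexivity | now apply H].
Qed.

Lemma Series_from1 (f : nat -> R) : f 1%nat = 0 ->
  Series (fun n => if (n <? 1)%nat then 0 else f n)
  = Series (fun n => if (n <? 2)%nat then 0 else f n).
Proof. intros H. apply Series_ext. intros [|[|n]]; simpl; auto. Qed.

Lemma Cmod_sqr (z : C) : Cmod z ^ 2 = fst z ^ 2 + snd z ^ 2.
Proof. unfold Cmod. apply pow2_sqrt. nra. Qed.

Section FinitelySupported.

Variables (A : nat -> C) (N : nat).
Hypothesis A_support : forall n, (N < n)%nat -> A n = RtoC 0.
Hypothesis A_0 : A 0%nat = RtoC 0.
Hypothesis A_1 : A 1%nat = RtoC 0.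

Lemma Cmod_sqr_support (n : nat) : (N < n)%nat -> Cmod (A n) ^ 2 = 0.
Proof. intros Hn. rewrite A_support, Cmod_0 by exact Hn. ring. Qed.

(* The complex inequality is the sum of the real inequalities for the real
   and imaginary parts, since |z|^2 = (Re z)^2 + (Im z)^2 termwise. *)
Lemma rellich_series :
  Series (fun n => if (n <? 1)%nat then 0 else (Cmod (second_diff A n)) ^ 2)
  >= Series (fun n => if (n <? 2)%nat then 0 else rho n * (Cmod (A n)) ^ 2).
Proof.
  set (re := fun n => fst (A n)). set (im := fun n => snd (A n)).
  assert (re_im : forall n, A n = RtoC 0 -> re n = 0 /\ im n = 0)
    by (intros n E; unfold re, im; rewrite E; split; reflexivity).
  destruct (re_im 0%nat A_0) as [re0 im0], (re_im 1%nat A_1) as [re1 im1].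
  assert (reN : forall n, (N < n)%nat -> re n = 0) by (intros; apply re_im; auto).
  assert (imN : forall n, (N < n)%nat -> im n = 0) by (intros; apply re_im; auto).
  rewrite Series_from1 by (rewrite Cmod_sqr; simpl; rewrite A_0, A_1; simpl; ring).
  rewrite !(Series_from2 _ N).
  - rewrite (sum_from2_ext _ (fun n => nabla (nabla re) n ^ 2 + nabla (nabla im) n ^ 2)).
    + rewrite (sum_from2_ext (fun n => rho n * _) (fun n => rho n * re n ^ 2 + rho n * im n ^ 2)).
      * rewrite !sum_from2_plus.
        pose proof (rellich_real re N re0 re1 reN).
        pose proof (rellich_real im N im0 im1 imN). lra.
      * intros n _. rewrite Cmod_sqr. unfold re, im. ring.
    + intros [|[|m]] Hm; [lia | lia |]. rewrite Cmod_sqr.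
      unfold nabla, re, im. simpl. ring.
  - intros n Hn. rewrite Cmod_sqr_support by lia. ring.
  - intros n Hn. destruct n as [|[|m]]; [lia | lia |].
    rewrite Cmod_sqr. simpl. rewrite !A_support by lia. simpl. ring.
Qed.

(* Strictness comes from rho_n > 9/(16 n^4) at an index where A_n != 0. *)
Lemma rho_series_strict : (exists n, A n <> RtoC 0) ->
  Series (fun n => if (n <? 2)%nat then 0 else rho n * (Cmod (A n)) ^ 2)
  > 9 / 16 * Series (fun n => if (n <? 2)%nat then 0 else (Cmod (A n)) ^ 2 / INR n ^ 4).
Proof.
  intros [j Hj].
  assert (Hj2 : (2 <= j)%nat)
    by (destruct j as [|[|j]]; [congruence | congruence | lia]).
  assert (HjN : (j <= N)%nat)
    by (destruct (Nat.le_gt_cases j N); [assumption | now destruct Hj; apply A_support]).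
  rewrite !(Series_from2 _ N), <- sum_from2_scal
    by (intros n Hn; rewrite Cmod_sqr_support by lia; unfold Rdiv; ring).
  apply Rlt_gt, (sum_from2_lt _ _ _ j); [| lia |].
  - intros n Hn. pose proof (rho_lower n Hn). pose proof (pow2_ge_0 (Cmod (A n))).
    unfold Rdiv in *. nra.
  - pose proof (rho_lower j Hj2). pose proof (Cmod_gt_0 (A j)) as [Hpos _].
    pose proof (pow_lt _ 2 (Hpos Hj)). unfold Rdiv in *. nra.
Qed.

(* Termwise, n^4 <= n^2 (n+1)^2, and the index-1 term vanishes. *)
Lemma weight_comparison :
  9 / 16 * Series (fun n => if (n <? 2)%nat then 0 else (Cmod (A n)) ^ 2 / INR n ^ 4)
  >= 9 / 16 * Series (fun n => if (n <? 1)%nat then 0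
                       else (Cmod (A n)) ^ 2 / (INR n ^ 2 * (INR n + 1) ^ 2)).
Proof.
  rewrite Series_from1 by (rewrite A_1, Cmod_0; unfold Rdiv; ring).
  rewrite !(Series_from2 _ N)
    by (intros n Hn; rewrite Cmod_sqr_support by lia; unfold Rdiv; ring).
  apply Rle_ge, Rmult_le_compat_l; [lra|]. apply sum_from2_le.
  intros n Hn. assert (H2 : 2 <= INR n) by (apply (le_INR 2); lia).
  apply Rmult_le_compat_l; [apply pow2_ge_0|].
  apply Rinv_le_contravar; [apply pow_lt; lra|].
  assert (INR n ^ 2 <= (INR n + 1) ^ 2) by (apply pow_incr; lra).
  pose proof (pow2_ge_0 (INR n)). simpl in *. nra.
Qed.

End FinitelySupported.

Theorem proposition5p1 (A : nat -> C) :
  finitely_supported A ->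
  A 0%nat = RtoC 0 -> A 1%nat = RtoC 0 ->
  (exists n : nat, A n <> RtoC 0) ->
  Series (fun n => if (n <? 1)%nat then 0 else (Cmod (second_diff A n)) ^ 2)
    >= Series (fun n => if (n <? 2)%nat then 0 else rho n * (Cmod (A n)) ^ 2)
  /\ Series (fun n => if (n <? 2)%nat then 0 else rho n * (Cmod (A n)) ^ 2)
    > 9 / 16 * Series (fun n => if (n <? 2)%nat then 0
                                else (Cmod (A n)) ^ 2 / INR n ^ 4)
  /\ 9 / 16 * Series (fun n => if (n <? 2)%nat then 0
                                else (Cmod (A n)) ^ 2 / INR n ^ 4)
    >= 9 / 16 * Series (fun n => if (n <? 1)%nat then 0
                         else (Cmod (A n)) ^ 2 / (INR n ^ 2 * (INR n + 1) ^ 2)).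
Proof.
  intros [N A_support] A_0 A_1 A_nonzero.
  split; [| split].
  - exact (rellich_series A N A_support A_0 A_1).
  - exact (rho_series_strict A N A_support A_0 A_1 A_nonzero).
  - exact (weight_comparison A N A_support A_1).
Qed.
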